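(* Let $(\mathcal{J}_g)_{g\in[G]}$ be a partition of $[p]$ into nonempty sets, $p_g=|\mathcal{J}_g|$, and let $\mathcal{S}=\{M\in\mathbb{R}^{p\times(n-1)}:\|M\|_{\mathrm F}\le1\}$. For $T\in\mathbb{R}^{p\times(n-1)}$ and $\lambda>0$ define $R^*\in\mathbb{R}^{p\times(n-1)}$ by $R^*_{\mathcal{J}_g,t}=T_{\mathcal{J}_g,t}\min\bigl\{\lambda p_g^{1/2}/\|T_{\mathcal{J}_g,t}\|_2,1\bigr\}$ (with $R^*_{\mathcal{J}_g,t}=0$ if $T_{\mathcal{J}_g,t}=0$), and assume $T\ne R^*$. Then \[ \operatorname*{argmax}_{M\in\mathcal{S}}\bigl\{\langle T,M\rangle-\lambda\|M\|_{\mathrm{grp}}\bigr\}=\Bigl\{\frac{T-R^*}{\|T-R^*\|_{\mathrm F}}\Bigr\}. \]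
   Context: $\|M\|_{\mathrm{grp}}=\sum_{g=1}^Gp_g^{1/2}\sum_{t=1}^{n-1}\|M_{\mathcal{J}_g,t}\|_2$, where $M_{\mathcal{J}_g,t}$ is the vector of entries of the $t$th column of $M$ with rows in $\mathcal{J}_g$; $\langle A,B\rangle=\mathrm{tr}(A^\top B)$. *)

From HB Require Import structures.
From mathcomp Require Import all_boot all_order all_algebra.
Set Implicit Arguments. Unset Strict Implicit. Unset Printing Implicit Defensive.
Import Order.TTheory GRing.Theory Num.Theory.
Local Open Scope ring_scope.

Section GroupNorms.
Variables (R : rcfType) (p G q : nat) (grp : 'I_p -> 'I_G).

Definition gsize (g : 'I_G) : nat := #|[set j : 'I_p | grp j == g]|.

Definition blocknorm (M : 'M[R]_(p, q)) (g : 'I_G) (t : 'I_q) : R :=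
  Num.sqrt (\sum_(j : 'I_p | grp j == g) M j t ^+ 2).

Definition frob (M : 'M[R]_(p, q)) : R :=
  Num.sqrt (\sum_(i : 'I_p) \sum_(t : 'I_q) M i t ^+ 2).

Definition grpnorm (M : 'M[R]_(p, q)) : R :=
  \sum_(g : 'I_G) Num.sqrt (gsize g)%:R * \sum_(t : 'I_q) blocknorm M g t.

Definition inner (A B : 'M[R]_(p, q)) : R := \tr (A^T *m B).

Definition Rstar (T : 'M[R]_(p, q)) (lam : R) : 'M[R]_(p, q) :=
  \matrix_(j, t)
    (if blocknorm T (grp j) t == 0 then 0
     else T j t * Num.min (lam * Num.sqrt (gsize (grp j))%:R / blocknorm T (grp j) t) 1).

Definition objective (T : 'M[R]_(p, q)) (lam : R) (M : 'M[R]_(p, q)) : R :=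
  inner T M - lam * grpnorm M.

Definition is_argmax (T : 'M[R]_(p, q)) (lam : R) (M : 'M[R]_(p, q)) : Prop :=
  frob M <= 1 /\
  forall M' : 'M[R]_(p, q), frob M' <= 1 -> objective T lam M' <= objective T lam M.

End GroupNorms.

From HB Require Import structures.
From mathcomp Require Import all_boot all_order all_algebra.
From mathcomp Require Import ring lra.

Set Implicit Arguments.
Unset Strict Implicit.
Unset Printing Implicit Defensive.
Import Order.TTheory GRing.Theory Num.Theory.
Local Open Scope ring_scope.

(* Blockwise, R^* is T shrunk into the ball of radius lam p_g^(1/2), so by
   Cauchy-Schwarz <R^*, M> <= lam ||M||_grp, with equality at M = T - R^*
   because each block of T - R^* vanishes unless the corresponding block of
   R^* lies on the sphere.  Hence on S the objective is bounded by
   <T - R^*, M> <= ||T - R^*||_F, the bound is attained at the normalised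
   residual, and the equality case of Cauchy-Schwarz in the unit ball makes
   that maximiser unique. *)

Section L2Norm.
Variables (R : rcfType) (I : finType) (P : pred I).
Implicit Types (a b : I -> R) (k : R).

Definition l2norm a : R := Num.sqrt (\sum_(i | P i) a i ^+ 2).

Lemma sum_sqr_ge0 a : 0 <= \sum_(i | P i) a i ^+ 2.
Proof. by apply: sumr_ge0 => i _; rewrite sqr_ge0. Qed.

Lemma l2norm_ge0 a : 0 <= l2norm a.
Proof. exact: sqrtr_ge0. Qed.

Lemma sqr_l2norm a : l2norm a ^+ 2 = \sum_(i | P i) a i ^+ 2.
Proof. by rewrite sqr_sqrtr ?sum_sqr_ge0. Qed.

Lemma l2normZ k a : l2norm (fun i => k * a i) = `|k| * l2norm a.
Proof.
rewrite /l2norm (eq_bigr (fun i => k ^+ 2 * a i ^+ 2)) => [|i _]; last exact: exprMn.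
by rewrite -mulr_sumr sqrtrM ?sqr_ge0 // sqrtr_sqr.
Qed.

Lemma l2norm_eq0 a : l2norm a = 0 -> forall i, P i -> a i = 0.
Proof.
move=> /eqP; rewrite sqrtr_eq0 => a_le0 i Pi.
have sum0 : \sum_(j | P j) a j ^+ 2 = 0 by apply/eqP; rewrite eq_le a_le0 sum_sqr_ge0.
by apply/eqP; rewrite -sqrf_eq0 (psumr_eq0P (fun j _ => sqr_ge0 (a j)) sum0).
Qed.

Lemma lagrange_identity a b :
  ((\sum_(i | P i) a i ^+ 2) * (\sum_(i | P i) b i ^+ 2)
     - (\sum_(i | P i) a i * b i) ^+ 2) *+ 2 =
  \sum_(i | P i) \sum_(j | P j) (a i * b j - a j * b i) ^+ 2.
Proof.
pose F i j := a i ^+ 2 * b j ^+ 2 - a i * b i * (a j * b j).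
have -> : \sum_(i | P i) \sum_(j | P j) (a i * b j - a j * b i) ^+ 2 =
          \sum_(i | P i) \sum_(j | P j) (F i j + F j i).
  by apply: eq_bigr => i _; apply: eq_bigr => j _; rewrite /F; ring.
rewrite (eq_bigr _ (fun i _ => big_split _ _ _ _ _)) big_split /=.
rewrite [X in _ = _ + X]exchange_big -mulr2n; congr (_ *+ 2).
by rewrite expr2 !big_distrlr -sumrB; apply: eq_bigr => i _; rewrite -sumrB.
Qed.

Lemma cauchy_schwarz a b : \sum_(i | P i) a i * b i <= l2norm a * l2norm b.
Proof.
rewrite -sqrtrM ?sum_sqr_ge0 // (le_trans (ler_norm _)) // -sqrtr_sqr.
rewrite ler_sqrt ?mulr_ge0 ?sum_sqr_ge0 // -subr_ge0 -(pmulrn_lge0 _ (ltn0Sn 1)).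
by rewrite lagrange_identity; apply: sumr_ge0 => i _; apply: sum_sqr_ge0.
Qed.

End L2Norm.

Section Shrinkage.
Variables (R : rcfType) (I : finType) (P : pred I) (x : I -> R) (r : R).
Hypothesis r_ge0 : 0 <= r.

Definition shrink : R :=
  if l2norm P x == 0 then 0 else Num.min (r / l2norm P x) 1.

Lemma shrink_ge0 : 0 <= shrink.
Proof.
rewrite /shrink; case: eqP => // _.
by rewrite le_min ler01 andbT divr_ge0 ?l2norm_ge0.
Qed.

Lemma shrink_le1 : shrink <= 1.
Proof. by rewrite /shrink; case: eqP => // _; rewrite ge_min lexx orbT. Qed.

Lemma shrink_l2norm_le : shrink * l2norm P x <= r.
Proof.
rewrite /shrink; case: eqP => [_|/eqP N0]; first by rewrite mul0r.
by rewrite -ler_pdivlMr ?lt0r ?N0 ?l2norm_ge0 // ge_min lexx.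
Qed.

(* Complementary slackness: either the block is left unshrunk (residual 0)
   or it is shrunk onto the sphere of radius r. *)
Lemma shrink_slack : (1 - shrink) * l2norm P x * (shrink * l2norm P x - r) = 0.
Proof.
rewrite /shrink; case: eqP => [->|/eqP N0]; first by rewrite mulr0 mul0r.
case: leP => _; first by rewrite divfK // subrr mulr0.
by rewrite subrr !mul0r.
Qed.

Lemma sum_shrink_mul_le (y : I -> R) :
  \sum_(i | P i) shrink * x i * y i <= r * l2norm P y.
Proof.
rewrite (eq_bigr (fun i => shrink * (x i * y i))) => [|i _]; last by rewrite mulrA.
rewrite -mulr_sumr (le_trans (ler_wpM2l shrink_ge0 (cauchy_schwarz _ _ _))) //.
by rewrite mulrA ler_wpM2r ?l2norm_ge0 ?shrink_l2norm_le.
Qed.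

Lemma sum_shrink_mul_residual :
  \sum_(i | P i) shrink * x i * ((1 - shrink) * x i) =
  r * l2norm P (fun i => (1 - shrink) * x i).
Proof.
rewrite l2normZ ger0_norm ?subr_ge0 ?shrink_le1 //.
transitivity (shrink * (1 - shrink) * l2norm P x ^+ 2).
  by rewrite sqr_l2norm mulr_sumr; apply: eq_bigr => i _; ring.
by apply/eqP; rewrite -subr_eq0 -shrink_slack; apply/eqP; ring.
Qed.

End Shrinkage.

Section FrobeniusInner.
Variables (R : rcfType) (p q : nat).
Implicit Types (A B M U : 'M[R]_(p, q)) (k : R).

Lemma innerE A B : inner A B = \sum_(u : 'I_p * 'I_q) A u.1 u.2 * B u.1 u.2.
Proof.
rewrite /inner /mxtrace (eq_bigr (fun t => \sum_i A i t * B i t)) => [|t _].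
  by rewrite exchange_big pair_big.
by rewrite !mxE; apply: eq_bigr => i _; rewrite mxE.
Qed.

Lemma innerC A B : inner A B = inner B A.
Proof. by rewrite !innerE; apply: eq_bigr => u _; rewrite mulrC. Qed.

Lemma innerBl A B M : inner (A - B) M = inner A M - inner B M.
Proof. by rewrite !innerE -sumrB; apply: eq_bigr => u _; rewrite !mxE mulrBl. Qed.

Lemma innerBr A B M : inner M (A - B) = inner M A - inner M B.
Proof. by rewrite ![inner M _]innerC innerBl. Qed.

Lemma innerZl k A B : inner (k *: A) B = k * inner A B.
Proof. by rewrite !innerE mulr_sumr; apply: eq_bigr => u _; rewrite mxE mulrA. Qed.

Lemma innerZr k A B : inner A (k *: B) = k * inner A B.
Proof. by rewrite innerC innerZl innerC. Qed.

Lemma frobE A : frob A = l2norm predT (fun u : 'I_p * 'I_q => A u.1 u.2).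
Proof. by rewrite /frob pair_big. Qed.

Lemma frob_ge0 A : 0 <= frob A.
Proof. exact: sqrtr_ge0. Qed.

Lemma sqr_frob A : frob A ^+ 2 = inner A A.
Proof. by rewrite frobE sqr_l2norm innerE; apply: eq_bigr => u _; rewrite expr2. Qed.

Lemma frobZ k A : frob (k *: A) = `|k| * frob A.
Proof.
rewrite !frobE -l2normZ /l2norm; congr Num.sqrt.
by apply: eq_bigr => u _; rewrite mxE.
Qed.

Lemma frob_eq0 A : frob A = 0 -> A = 0.
Proof.
rewrite frobE => /l2norm_eq0 A0; apply/matrixP => i t.
by rewrite mxE; apply: (A0 (i, t)).
Qed.

Lemma inner_le_frob A B : inner A B <= frob A * frob B.
Proof. by rewrite innerE !frobE; apply: cauchy_schwarz. Qed.

Lemma frob_le1_inner_ge1 U M : frob U = 1 -> frob M <= 1 -> 1 <= inner U M -> M = U.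
Proof.
move=> U1 M1 UM1; apply/eqP; rewrite -subr_eq0; apply/eqP/frob_eq0.
have := sqr_frob (M - U); rewrite innerBl !innerBr (innerC M U) -!sqr_frob U1.
have := frob_ge0 M; have := frob_ge0 (M - U); nra.
Qed.

Lemma unit_ball_argmax (f : 'M[R]_(p, q) -> R) U (d : R) :
  frob U = 1 -> 0 < d -> f U = d -> (forall M, f M <= d * inner U M) ->
  forall M, (frob M <= 1 /\ forall M', frob M' <= 1 -> f M' <= f M) <-> M = U.
Proof.
move=> U1 d_gt0 fU f_le M; split=> [[M1 M_max]|->].
  apply: frob_le1_inner_ge1 => //; rewrite -(ler_pM2l d_gt0) mulr1 -{1}fU.
  by rewrite (le_trans (M_max U _)) ?U1.
split=> [|M' M'1]; first by rewrite U1.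
have UM' : inner U M' <= 1.
  by apply: le_trans (inner_le_frob U M') _; rewrite U1 mul1r.
by rewrite fU; apply: le_trans (f_le M') (ler_piMr (ltW d_gt0) UM').
Qed.

End FrobeniusInner.

Section GroupLasso.
Variables (R : rcfType) (p G q : nat) (grp : 'I_p -> 'I_G).
Implicit Types (A B M : 'M[R]_(p, q)) (k : R).

Lemma inner_blocks A B :
  inner A B = \sum_g \sum_t \sum_(j | grp j == g) A j t * B j t.
Proof.
rewrite innerE -(pair_big predT predT (fun j t => A j t * B j t)) /=.
by rewrite (partition_big grp predT) //; apply: eq_bigr => g _; apply: exchange_big.
Qed.

Lemma blocknormZ k M g t : blocknorm grp (k *: M) g t = `|k| * blocknorm grp M g t.
Proof.
rewrite -(l2normZ (fun j => grp j == g)) /l2norm /blocknorm; congr Num.sqrt.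
by apply: eq_bigr => j _; rewrite mxE.
Qed.

Lemma grpnormZ k M : grpnorm grp (k *: M) = `|k| * grpnorm grp M.
Proof.
rewrite /grpnorm mulr_sumr; apply: eq_bigr => g _; rewrite mulrCA; congr (_ * _).
by rewrite mulr_sumr; apply: eq_bigr => t _; apply: blocknormZ.
Qed.

Lemma objectiveZ (T : 'M[R]_(p, q)) lam k M :
  0 <= k -> objective grp T lam (k *: M) = k * objective grp T lam M.
Proof. by move=> k_ge0; rewrite /objective innerZr grpnormZ ger0_norm //; ring. Qed.

Variables (T : 'M[R]_(p, q)) (lam : R).
Hypothesis lam_ge0 : 0 <= lam.

Let shrink_at g t : R :=
  shrink (fun j => grp j == g) (fun j => T j t) (lam * Num.sqrt (gsize grp g)%:R).

Lemma RstarE t g j : grp j = g -> Rstar grp T lam j t = shrink_at g t * T j t.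
Proof.
move=> <-; rewrite mxE /shrink_at /shrink /l2norm -/(blocknorm grp T (grp j) t).
by case: ifP; rewrite ?mul0r // mulrC.
Qed.

Lemma Rstar_residualE t g j : grp j = g ->
  (T - Rstar grp T lam) j t = (1 - shrink_at g t) * T j t.
Proof. by move=> gj; rewrite 2!mxE (RstarE t gj); ring. Qed.

Lemma inner_Rstar_le M : inner (Rstar grp T lam) M <= lam * grpnorm grp M.
Proof.
rewrite inner_blocks /grpnorm mulr_sumr; apply: ler_sum => g _.
rewrite mulrA mulr_sumr; apply: ler_sum => t _.
rewrite (eq_bigr (fun j => shrink_at g t * T j t * M j t)) => [|j /eqP gj]; last first.
  by rewrite (RstarE t gj).
exact: sum_shrink_mul_le (mulr_ge0 lam_ge0 (sqrtr_ge0 _)) _.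
Qed.

Lemma inner_Rstar_residual :
  inner (Rstar grp T lam) (T - Rstar grp T lam) =
  lam * grpnorm grp (T - Rstar grp T lam).
Proof.
rewrite inner_blocks /grpnorm mulr_sumr; apply: eq_bigr => g _.
rewrite mulrA mulr_sumr; apply: eq_bigr => t _.
rewrite (eq_bigr (fun j => shrink_at g t * T j t * ((1 - shrink_at g t) * T j t)))
  => [|j /eqP gj]; last by rewrite (RstarE t gj) (Rstar_residualE t gj).
rewrite sum_shrink_mul_residual; congr (_ * Num.sqrt _).
by apply: eq_bigr => j /eqP gj; rewrite (Rstar_residualE t gj).
Qed.

Lemma objective_le_inner_residual M :
  objective grp T lam M <= inner (T - Rstar grp T lam) M.
Proof. by rewrite /objective innerBl lerD2l lerN2 inner_Rstar_le. Qed.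

Lemma objective_residual :
  objective grp T lam (T - Rstar grp T lam) = frob (T - Rstar grp T lam) ^+ 2.
Proof. by rewrite /objective sqr_frob innerBl inner_Rstar_residual. Qed.

End GroupLasso.

Theorem mainTheorem5 (R : rcfType) (p G n : nat) (grp : 'I_p -> 'I_G)
  (grp_nonempty : forall g : 'I_G, exists j : 'I_p, grp j = g)
  (T : 'M[R]_(p, n.-1)) (lam : R) (lam_pos : 0 < lam)
  (hT : T != Rstar grp T lam) :
  forall M : 'M[R]_(p, n.-1),
    is_argmax grp T lam M <->
    M = (frob (T - Rstar grp T lam))^-1 *: (T - Rstar grp T lam).
Proof.
have lam_ge0 := ltW lam_pos.
have objD := objective_residual grp T lam.
set D := T - Rstar grp T lam in hT objD *.
have d_gt0 : 0 < frob D.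
  rewrite lt0r frob_ge0 andbT; apply: contra hT => /eqP /frob_eq0 /eqP.
  by rewrite subr_eq0.
have d_neq0 : frob D != 0 by rewrite gt_eqF.
have d_inv_ge0 : 0 <= (frob D)^-1 by rewrite invr_ge0 ltW.
apply: (unit_ball_argmax _ d_gt0).
- by rewrite frobZ ger0_norm // mulVf.
- by rewrite objectiveZ // objD expr2 mulKf.
- move=> M; rewrite innerZl mulrA mulfV // mul1r.
  exact: objective_le_inner_residual.
Qed.
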